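(* Let $R$ be a finite group and let $T<R$ be a proper subgroup. Suppose that $[R:T]=\prod_{i=1}^{\ell}p_i^{c_i}$, where the $p_i$ are distinct primes and $c_i>0$. Then \[ |\mathrm{Sub}(R,T)| \leq [R:T]^{\ell-1}\prod_{i=1}^{\ell} S(p_i,c_i). \]
   Context: $\mathrm{Sub}(R,T)=\{H\le R : T\le H\}$. For a prime $p$ let $C(p)=\prod_{i\ge 1}\frac{1}{1-p^{-i}}$ and $c(p)=2.129\,C(p)$. For a prime $p$ and a positive integer $a$ define $S(p,1)=2$, $S(p,2)=p+3$, $S(p,3)=2p^2+2p+4$, $S(p,4)=p^4+3p^3+4p^2+3p+5$, $S(p,5)=2p^6+2p^5+6p^4+6p^3+6p^2+4p+6$, and $S(p,a)=c(p)\,p^{a^2/2}$ for $a\ge 6$. *)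

From Stdlib Require Import Reals.
From Coquelicot Require Import Coquelicot.
From mathcomp Require Import all_boot all_fingroup.

Set Implicit Arguments. Unset Strict Implicit. Unset Printing Implicit Defensive.

Definition SubRT (gT : finGroupType) (R T : {group gT}) : {set {group gT}} :=
  [set H : {group gT} | (T \subset H) && (H \subset R)].

Local Open Scope R_scope.

Fixpoint Cpartial (p : nat) (n : nat) : R :=
  match n with
  | O => 1
  | S m => Cpartial p m * / (1 - / (INR p ^ (S m)))
  end.

Definition Cconst (p : nat) : R := real (Lim_seq (Cpartial p)).

Definition cconst (p : nat) : R := 2129 / 1000 * Cconst p.

(* S(p,a); the value at a = 0 is irrelevant (c_i > 0) and is taken from the generic branch *)
Definition Sfun (p a : nat) : R :=
  let x := INR p in
  match a with
  | 1 => 2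
  | 2 => x + 3
  | 3 => 2 * x ^ 2 + 2 * x + 4
  | 4 => x ^ 4 + 3 * x ^ 3 + 4 * x ^ 2 + 3 * x + 5
  | 5 => 2 * x ^ 6 + 2 * x ^ 5 + 6 * x ^ 4 + 6 * x ^ 3 + 6 * x ^ 2 + 4 * x + 6
  | _ => cconst p * Rpower x (INR (a * a)%N / 2)
  end.

(* If [Y <= X] and [|X : Y| = p^a], double counting the pairs (H, x) with
   [x \in H :\: Y], where H runs over the intermediate subgroups of order
   [p^(j+1) |Y|], bounds their number by the Gaussian binomial [[a, j]_p]:
   every such x generates with Y a subgroup K strictly above Y, and the H
   through x lie above K, a smaller interval.  Summing over j gives the number
   of subspaces of [F_p^a], which is [S(p, a)] for [a <= 5]; for [a >= 6] the
   crude bound [(a + 1) max_j p^(j (a - j + 1)) <= p^(a^2/2)] suffices, as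
   [C(p) >= 1].
   In general, fix Sylow [p_i]-subgroups [P_i] of R.  For T <= H <= R the
   elements g such that [P_i] meets both [T^g] and [H^g] in Sylow subgroups
   form a union of cosets [g (T^g P_i)], so there are at least [|T| p_i^c_i]
   of them, and the tuple [(g_i, P_i :&: H^(g_i))_i] determines H: the group
   generated by T and the Sylow subgroups [(P_i :&: H^(g_i))^(g_i^-1)] of H has
   index in H dividing [|R : T|] and prime to every [p_i].  The second
   coordinate ranges over an interval of [P_i] of index [p_i^c_i], hence
   [|Sub(R,T)| |T|^l |R : T| <= prod_i |R| S(p_i, c_i)]. *)

From Stdlib Require Import ZArith Reals Lra Lia.
From Coquelicot Require Import Coquelicot.
From HB Require Import structures.
From mathcomp Require Import all_boot all_fingroup pgroup sylow zify.

Set Implicit Arguments. Unset Strict Implicit. Unset Printing Implicit Defensive.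

Section EulerProduct.
Local Open Scope R_scope.
Variable p : nat.
Hypothesis p_ge2 : 2 <= INR p.

Let y := / INR p.

Let y_bounds : 0 < y <= / 2.
Proof. by split; [apply: Rinv_0_lt_compat | apply: Rinv_le_contravar]; lra. Qed.

Let y_pow_bounds n : 0 < y ^ n.+1 <= y.
Proof.
have [y0 y2] := y_bounds.
elim: n => [|n [IH0 IH]] /=; first lra.
split; first by apply: Rmult_lt_0_compat.
by rewrite -[X in _ <= X]Rmult_1_r; apply: Rmult_le_compat_l; simpl in *; lra.
Qed.

Lemma Cpartial_S n : Cpartial p n.+1 = Cpartial p n / (1 - y ^ n.+1).
Proof. by rewrite /= -/(INR p ^ n.+1) -pow_inv. Qed.

Lemma Cpartial_gt0 n : 0 < Cpartial p n.
Proof.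
elim: n => [|n IH] /=; first lra.
rewrite -/(Cpartial p n.+1) Cpartial_S.
by have [_ yn] := y_pow_bounds n; have [_ y2] := y_bounds; apply: Rdiv_lt_0_compat; lra.
Qed.

Lemma Cpartial_nondecreasing n : Cpartial p n <= Cpartial p n.+1.
Proof.
have [yn0 yn] := y_pow_bounds n; have [_ y2] := y_bounds; have C0 := Cpartial_gt0 n.
by rewrite Cpartial_S; apply/Rle_div_r; nra.
Qed.

(* That is, [prod_(i <= n+1) (1 - y^i) >= 1 - y - y^2 + y^(n+2)]: with [z = y^(n+2)]
   and [A = 1 - y - y^2], [(1 - z)(A + z) - (A + y z) = z (y^2 - z) >= 0]. *)
Lemma Cpartial_invariant n : Cpartial p n.+1 * (1 - y - y ^ 2 + y ^ n.+2) <= 1.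
Proof.
have [y0 y2] := y_bounds.
elim: n => [|n IH].
  rewrite Cpartial_S /= /Rdiv !Rmult_1_l Rmult_1_r.
  have -> : 1 - y - y * y + y * y = 1 - y by ring.
  rewrite Rinv_l; lra.
rewrite Cpartial_S.
have [z0 zy] := y_pow_bounds n.+1.
set z := y ^ n.+2 in IH z0 zy *.
have -> : y ^ n.+3 = y * z by [].
have zy2 : z <= y ^ 2.
  have [w0 wy] := y_pow_bounds n.
  rewrite /z /= -/(y ^ n.+1) Rmult_1_r; apply: Rmult_le_compat_l; lra.
have C0 := Cpartial_gt0 n.+1; set C := Cpartial p n.+1 in IH C0 *.
have key : C * (1 - y - y ^ 2 + y * z) <= 1 - z.
  have : 0 <= C * (z * (y ^ 2 - z)) by apply: Rmult_le_pos; nra.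
  simpl in *; nra.
apply: (Rmult_le_reg_r (1 - z)); first lra.
have -> : C / (1 - z) * (1 - y - y ^ 2 + y * z) * (1 - z) = C * (1 - y - y ^ 2 + y * z).
  by field; lra.
lra.
Qed.

Lemma Cpartial_le4 n : Cpartial p n <= 4.
Proof.
case: n => [|n]; first by simpl; lra.
have := Cpartial_invariant n; have := Cpartial_gt0 n.+1.
have [y0 y2] := y_bounds; have [z0 _] := y_pow_bounds n.+1.
set C := Cpartial p n.+1; set z := y ^ n.+2 in z0 * => C0 inv.
have A4 : / 4 <= 1 - y - y ^ 2 by simpl; nra.
have : 0 <= C * (1 - y - y ^ 2 - / 4) by apply: Rmult_le_pos; lra.
have : 0 <= C * z by apply: Rmult_le_pos; lra.
have : C * (1 - y - y ^ 2 + z) = C * (1 - y - y ^ 2 - / 4) + C * z + C / 4 by field.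
lra.
Qed.

Lemma Cconst_ge1 : 1 <= Cconst p.
Proof.
have Cfin : ex_finite_lim_seq (Cpartial p).
  exact: (ex_finite_lim_seq_incr _ 4 Cpartial_nondecreasing Cpartial_le4).
exact: (is_lim_seq_incr_compare _ _ (Lim_seq_correct' _ Cfin) Cpartial_nondecreasing 0).
Qed.
End EulerProduct.

Lemma exponent_le_half_square c i : (6 <= c)%N -> (i <= c)%N ->
  (2 * ((c - i + 1) * i + (c - 3)) <= c * c)%N.
Proof.
(* the difference is [(c - i - 1)^2 + (i - 2)^2 + 1] *)
move=> c6 ic.
have := Z.square_nonneg (Z.of_nat c - Z.of_nat i - 1).
have := Z.square_nonneg (Z.of_nat i - 2).
nia.
Qed.

Lemma succ_le_exp2 c : (6 <= c)%N -> (c + 1 <= 2 ^ (c - 3))%N.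
Proof.
move=> c6; rewrite -(subnK c6); elim: (c - 6)%N => [|k IH] //.
rewrite (_ : (k.+1 + 6 - 3 = (k + 6 - 3).+1)%N) ?expnS; lia.
Qed.

Lemma INR_expn m k : INR (m ^ k) = (INR m ^ k)%R.
Proof. by elim: k => [|k IH] //; rewrite expnS mult_INR IH. Qed.

Section GaussianBinomial.
Local Open Scope R_scope.
Variable p : nat.
Hypothesis p_ge2 : 2 <= INR p.

Fixpoint qbinom (a j : nat) : R :=
  match j, a with
  | 0, _ => 1
  | j'.+1, 0 => 0
  | j'.+1, a'.+1 => (INR p ^ a'.+1 - 1) / (INR p ^ j'.+1 - 1) * qbinom a' j'
  end.

Definition galois_number a := sum_f_R0 (qbinom a) a.

Lemma qbinom_n0 a : qbinom a 0 = 1.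
Proof. by case: a. Qed.

Lemma qbinom_SS a j :
  qbinom a.+1 j.+1 = (INR p ^ a.+1 - 1) / (INR p ^ j.+1 - 1) * qbinom a j.
Proof. by []. Qed.

Let pow_p_ge1 k : 1 <= INR p ^ k.
Proof. by apply: pow_R1_Rle; lra. Qed.

Let pow_p_gt1 k : 1 < INR p ^ k.+1.
Proof. by apply: Rlt_pow_R1; [lra | lia]. Qed.

Lemma qbinom_ge0 a j : 0 <= qbinom a j.
Proof.
elim: j a => [|j IH] [|a]; try by simpl; lra.
rewrite qbinom_SS; apply: Rmult_le_pos => //; have := pow_p_ge1 a.+1; have := pow_p_gt1 j.
move=> pj pa; apply: Rdiv_le_0_compat; lra.
Qed.

Lemma qbinom_eq0 a j : (a < j)%N -> qbinom a j = 0.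
Proof. by elim: a j => [|a IH] [|j] //= aj; rewrite IH // Rmult_0_r. Qed.

Lemma qbinom_le_succ a j : qbinom a j <= qbinom a.+1 j.+1.
Proof.
case: (leqP j a) => ja; last by rewrite qbinom_eq0 //; apply: qbinom_ge0.
rewrite qbinom_SS -[X in X <= _]Rmult_1_l.
apply: Rmult_le_compat_r; first exact: qbinom_ge0.
have pj := pow_p_gt1 j.
have ja' : INR p ^ j.+1 <= INR p ^ a.+1 by apply: Rle_pow; [lra | lia].
by apply/Rle_div_r; lra.
Qed.

Lemma qbinom_le_shift a j m : qbinom a j <= qbinom (a + m) (j + m).
Proof.
elim: m => [|m IH]; first by rewrite !addn0; lra.
by rewrite !addnS; apply: Rle_trans IH (qbinom_le_succ _ _).
Qed.

Lemma qbinom_le_pow a j : (j <= a)%N -> qbinom a j <= INR p ^ ((a - j + 1) * j).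
Proof.
elim: j a => [|j IH] [|a] ja //; try by simpl; lra.
rewrite qbinom_SS.
set u := INR p ^ (a - j); set v := INR p ^ j.+1.
have u1 : 1 <= u := pow_p_ge1 _.
have vp : INR p <= v by rewrite /v /=; have := pow_p_ge1 j; nra.
have -> : INR p ^ a.+1 = u * v by rewrite /u /v -pow_add; congr pow; lia.
have -> : ((a.+1 - j.+1 + 1) * j.+1 = (a - j + 1) + (a - j + 1) * j)%N by lia.
rewrite pow_add; apply: Rmult_le_compat; [|exact: qbinom_ge0| |exact: IH].
  by apply: Rdiv_le_0_compat; nra.
rewrite pow_add /= Rmult_1_r -/u.
have h1 : 0 <= u * (v - INR p) * (INR p - 1) by apply: Rmult_le_pos; [apply: Rmult_le_pos|]; lra.
have h2 : 0 <= u * INR p * (INR p - 2) by apply: Rmult_le_pos; [apply: Rmult_le_pos|]; lra.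
apply/Rle_div_l; nra.
Qed.
Lemma galois_number_small a : (1 <= a <= 5)%N -> galois_number a = Sfun p a.
Proof.
have p1 : INR p - 1 <> 0 by lra.
have p2 : INR p * INR p - 1 <> 0 by nra.
have p3 : INR p * (INR p * INR p) - 1 <> 0 by nra.
have p4 : INR p * (INR p * (INR p * INR p)) - 1 <> 0 by nra.
have p5 : INR p * (INR p * (INR p * (INR p * INR p))) - 1 <> 0 by nra.
by case: a => [|[|[|[|[|[|a]]]]]] // _; rewrite /galois_number /Sfun /=; field.
Qed.

Lemma galois_number_large a :
  (6 <= a)%N -> galois_number a <= Rpower (INR p) (INR (a * a) / 2).
Proof.
move=> a6; set M := Rpower (INR p) (INR (a * a) / 2).
have a1_gt0 : 0 < INR a.+1 by apply: lt_0_INR; lia.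
have term_le j : (j <= a)%coq_nat -> qbinom a j <= M / INR a.+1.
  move=> /leP ja; apply/Rle_div_r => //.
  have a1_le : INR a.+1 <= INR p ^ (a - 3).
    have p2 : (2 <= p)%N by apply/leP; apply: INR_le.
    rewrite -INR_expn; apply: le_INR; apply/leP.
    by rewrite -addn1; apply: leq_trans (succ_le_exp2 a6) _; rewrite leq_exp2r; lia.
  apply: Rle_trans (Rmult_le_compat _ _ _ _ (qbinom_ge0 a j) (pos_INR _)
                     (qbinom_le_pow ja) a1_le) _.
  rewrite -pow_add -Rpower_pow; last lra.
  apply: Rle_Rpower; first lra.
  have := le_INR _ _ (leP (exponent_le_half_square a6 ja)).
  by rewrite -[(_ + _)%coq_nat]/(_ + _)%N !mult_INR /=; lra.
apply: Rle_trans (sum_Rle _ _ a term_le) _.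
by rewrite sum_cte /Rdiv Rmult_assoc Rinv_l; lra.
Qed.
End GaussianBinomial.

Lemma galois_number_le_Sfun p a :
  (2 <= INR p)%R -> (0 < a)%N -> (galois_number p a <= Sfun p a)%R.
Proof.
move=> p2 a0; case: (leqP a 5) => a5.
  by rewrite galois_number_small ?a0 //; apply: Rle_refl.
have [k ->] : exists k, a = k.+4.+2 by exists (a - 6)%N; lia.
change (Sfun p k.+4.+2) with (cconst p * Rpower (INR p) (INR (k.+4.+2 * k.+4.+2) / 2))%R.
have c1 : (1 <= cconst p)%R by have := Cconst_ge1 p2; rewrite /cconst; lra.
have M0 : (0 < Rpower (INR p) (INR (k.+4.+2 * k.+4.+2) / 2))%R by apply: exp_pos.
apply: Rle_trans (galois_number_large p2 _) _ => //; nra.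
Qed.

Lemma Sfun_ge0 p a : (2 <= INR p)%R -> (0 < a)%N -> (0 <= Sfun p a)%R.
Proof.
move=> p2 a0; apply: Rle_trans (galois_number_le_Sfun p2 a0).
by apply: cond_pos_sum => j; apply: qbinom_ge0.
Qed.

Lemma INR_prime_ge2 p : prime p -> (2 <= INR p)%R.
Proof. by move=> p_pr; apply: (le_INR 2); apply/leP; apply: prime_gt1. Qed.

Lemma card_le_sum_cover (I T : finType) (A : {set T}) (B : {pred I}) (F : I -> {set T}) :
  {in A, forall x, exists2 i, i \in B & x \in F i} -> (#|A| <= \sum_(i in B) #|F i|)%N.
Proof.
move=> cover; rewrite -sum1_card.
apply: (@leq_trans (\sum_(x in A) \sum_(i in B) (x \in F i : nat))%N).
  apply: leq_sum => x /cover [i iB xFi].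
  by rewrite (bigD1 i) //= xFi.
rewrite exchange_big /=; apply: leq_sum => i _.
rewrite -sum1_card big_mkcond [X in (_ <= X)%N]big_mkcond /=.
by apply: leq_sum => x _; case: (x \in A); case: (x \in F i).
Qed.

Lemma sum_setD_exchange (I T : finType) (L : {set I}) (F : I -> {set T}) (X Y : {set T}) :
  {in L, forall H, F H \subset X} ->
  (\sum_(H in L) #|F H :\: Y| = \sum_(x in X :\: Y) #|[set H in L | x \in F H]|)%N.
Proof.
move=> sFX.
have cardD H : H \in L -> #|F H :\: Y| = (\sum_(x in X :\: Y) (x \in F H))%N.
  move=> /sFX /subsetP sFHX.
  rewrite -sum1_card big_mkcond [RHS]big_mkcond /=; apply: eq_bigr => x _.
  rewrite !inE; have := sFHX x.
  by case: (x \in F H); case: (x \in Y); case: (x \in X) => //= /(_ isT).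
rewrite (eq_bigr _ cardD) exchange_big /=; apply: eq_bigr => x _.
rewrite -sum1_card big_mkcond [RHS]big_mkcond /=.
by apply: eq_bigr => H _; rewrite !inE; case: (H \in L); case: (x \in F H).
Qed.

Lemma sum_card_le_disjoint (I T : finType) (L : {set I}) (F : I -> {set T}) (X : {set T}) :
  {in L, forall H, F H \subset X} ->
  {in L &, forall H1 H2 x, x \in F H1 -> x \in F H2 -> H1 = H2} ->
  (\sum_(H in L) #|F H| <= #|X|)%N.
Proof.
move=> sFX injF; have := sum_setD_exchange set0 sFX; rewrite setD0.
under eq_bigr do rewrite setD0.
move=> ->; rewrite -sum1_card; apply: leq_sum => x _; apply/card_le1_eqP => H1 H2.
by rewrite !inE => /andP [H1L xH1] /andP [H2L xH2]; apply: (injF _ _ H2L H1L _ xH2 xH1).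
Qed.

Lemma INR_sum_le_card (T : finType) (A : {pred T}) (f : T -> nat) (M : R) :
  {in A, forall x, (INR (f x) <= M)%R} -> (INR (\sum_(x in A) f x) <= INR #|A| * M)%R.
Proof.
move=> fM; rewrite -sum1_card.
elim/big_rec2: _ => [|x s1 s2 xA IH]; first by rewrite Rmult_0_l; apply: Rle_refl.
by rewrite !plus_INR Rmult_plus_distr_r Rmult_1_l; have := fM x xA; lra.
Qed.

Lemma INR_sum_le (f : nat -> nat) (g : nat -> R) n :
  (forall j, (j <= n)%N -> (INR (f j) <= g j)%R) ->
  (INR (\sum_(j < n.+1) f j) <= sum_f_R0 g n)%R.
Proof.
elim: n => [|n IH] fg; first by rewrite big_ord1; apply: fg.
rewrite big_ord_recr plus_INR /=; apply: Rplus_le_compat; last exact: fg.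
by apply: IH => j /leqW; apply: fg.
Qed.

Lemma Rle_div_of_scaled_le (n y A B q : R) : (0 < y)%R -> (1 < B)%R ->
  (n * ((B - 1) * y) <= (A - 1) * y * q)%R -> (n <= (A - 1) / (B - 1) * q)%R.
Proof.
move=> y0 B1 le_scaled.
have -> : ((A - 1) / (B - 1) * q = (A - 1) * q / (B - 1))%R by field; lra.
apply/Rle_div_r; first lra.
by apply: (Rmult_le_reg_r y) => //; nra.
Qed.

Lemma INR_expn_mul_sub p k n : (0 < p)%N -> INR (p ^ k * n - n) = ((INR p ^ k - 1) * INR n)%R.
Proof.
move=> p0; rewrite minus_INR ?mult_INR ?INR_expn; first ring.
by apply/leP; rewrite leq_pmull // expn_gt0 p0.
Qed.

Section PrimePowerIndex.
Local Open Scope group_scope.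
Variables (gT : finGroupType) (p : nat).
Hypothesis p_pr : prime p.

Definition SubRT_level (X Y : {group gT}) j :=
  [set H in SubRT X Y | #|H| == (p ^ j * #|Y|)%N].

Let p_gt1 : (1 < p)%N. Proof. exact: prime_gt1. Qed.

Lemma card_mid_pexp (X Y K : {group gT}) a :
  Y \subset K -> K \subset X -> #|X| = (p ^ a * #|Y|)%N ->
  exists2 k, (k <= a)%N & #|K| = (p ^ k * #|Y|)%N.
Proof.
move=> sYK sKX oX.
have iXY : #|X : Y| = (p ^ a)%N.
  apply/eqP; rewrite -(eqn_pmul2l (cardG_gt0 Y)) Lagrange; last exact: subset_trans sKX.
  by rewrite oX mulnC.
have : (#|K : Y| %| p ^ a)%N by rewrite -iXY -(Lagrange_index sKX sYK) dvdn_mull.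
case/(dvdn_pfactor _ _ p_pr) => k ka iKY; exists k => //.
by rewrite -(Lagrange sYK) iKY mulnC.
Qed.

Lemma card_SubRT_level0 (X Y : {group gT}) : (#|SubRT_level X Y 0| <= 1)%N.
Proof.
rewrite -(cards1 Y); apply: subset_leq_card; apply/subsetP => H.
rewrite !inE expn0 mul1n => /andP [/andP [sYH _] /eqP oH].
apply/eqP; apply: group_inj; apply/eqP.
by rewrite eq_sym eqEcard sYH oH leqnn.
Qed.

Lemma SubRT_level_eq0 (X Y : {group gT}) a j :
  #|X| = (p ^ a * #|Y|)%N -> (a < j)%N -> SubRT_level X Y j = set0.
Proof.
move=> oX aj; apply/setP => H; rewrite !inE; apply/negbTE/negP.
move=> /andP [/andP [_ /subset_leq_card]]; rewrite oX => /[swap] /eqP ->.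
by rewrite leq_pmul2r ?cardG_gt0 // leq_exp2l // leqNgt aj.
Qed.

Lemma SubRT_level_through (X Y : {group gT}) j k x :
  #|Y <*> <[x]>| = (p ^ k * #|Y|)%N -> (k <= j)%N ->
  [set H in SubRT_level X Y j | x \in H] \subset SubRT_level X (Y <*> <[x]>)%G (j - k).
Proof.
move=> oK kj; apply/subsetP => H; rewrite !inE.
move=> /andP [/andP [/andP [sYH sHX] /eqP oH] xH].
by rewrite join_subG sYH cycle_subG xH sHX oH oK mulnA -expnD (subnK kj) eqxx.
Qed.

Lemma SubRT_level_through_eq0 (X Y : {group gT}) j k x :
  #|Y <*> <[x]>| = (p ^ k * #|Y|)%N -> (j < k)%N ->
  [set H in SubRT_level X Y j | x \in H] = set0.
Proof.
move=> oK jk; apply/setP => H; rewrite !inE; apply/negbTE/negP.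
move=> /andP [/andP [/andP [sYH _] /eqP oH] xH].
have := subset_leq_card (_ : Y <*> <[x]> \subset H).
rewrite join_subG sYH cycle_subG xH oK oH => /(_ isT).
by rewrite leq_pmul2r ?cardG_gt0 // leq_exp2l // leqNgt jk.
Qed.

Let p_ge2R : (2 <= INR p)%R := INR_prime_ge2 p_pr.

Lemma card_SubRT_level_double_count a (X Y : {group gT}) j q :
  Y \subset X -> #|X| = (p ^ a.+1 * #|Y|)%N ->
  (forall x, x \in X :\: Y ->
     (INR #|[set H in SubRT_level X Y j.+1 | x \in H]| <= q)%R) ->
  (INR #|SubRT_level X Y j.+1| <= (INR p ^ a.+1 - 1) / (INR p ^ j.+1 - 1) * q)%R.
Proof.
move=> sYX oX through; set L := SubRT_level X Y j.+1.
have sHX H : H \in L -> H \subset X by rewrite !inE => /andP [/andP [_ ->]].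
have := INR_sum_le_card through; rewrite -sum_setD_exchange //.
have cardD H : H \in L -> #|H :\: Y| = (p ^ j.+1 * #|Y| - #|Y|)%N.
  by rewrite !inE => /andP [/andP [sYH _] /eqP oH]; rewrite cardsD (setIidPr sYH) oH.
rewrite (eq_bigr _ cardD) sum_nat_const mult_INR cardsD (setIidPr sYX) oX.
rewrite !INR_expn_mul_sub ?prime_gt0 // => count.
have Y0 : (0 < INR #|Y|)%R by apply: lt_0_INR; apply/ltP.
have pj1 : (1 < INR p ^ j.+1)%R by apply: Rlt_pow_R1; [lra | lia].
exact: Rle_div_of_scaled_le count.
Qed.

Lemma card_SubRT_level_le a (X Y : {group gT}) j :
  Y \subset X -> #|X| = (p ^ a * #|Y|)%N -> (INR #|SubRT_level X Y j| <= qbinom p a j)%R.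
Proof.
elim/ltn_ind: a X Y j => a IH X Y [|j] sYX oX.
  by rewrite qbinom_n0; have /leP/le_INR := card_SubRT_level0 X Y.
case: a IH oX => [|a] IH oX; first by rewrite (SubRT_level_eq0 oX) // cards0; apply: Rle_refl.
rewrite qbinom_SS; apply: card_SubRT_level_double_count => // x /setDP [xX xnY].
set K := (Y <*> <[x]>)%G.
have sYK : Y \subset K := joing_subl Y <[x]>.
have xK : x \in K by rewrite (subsetP (joing_subr Y <[x]>)) ?cycle_id.
have sKX : K \subset X by rewrite join_subG sYX cycle_subG.
have [k ka oK] := card_mid_pexp sYK sKX oX.
have k0 : (0 < k)%N.
  rewrite lt0n; apply: contraNneq xnY => k0; move: oK; rewrite k0 expn0 mul1n => oK.
  by have /eqP -> : Y :==: K by rewrite eqEcard sYK oK leqnn.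
case: (leqP k j.+1) => kj; last first.
  by rewrite (SubRT_level_through_eq0 _ oK kj) cards0; apply: qbinom_ge0.
have oXK : #|X| = (p ^ (a.+1 - k) * #|K|)%N by rewrite oX oK mulnA -expnD subnK.
apply: Rle_trans (le_INR _ _ (leP (subset_leq_card (SubRT_level_through X oK kj)))) _.
apply: Rle_trans (IH _ _ X K _ sKX oXK) _; first by rewrite ltn_subrL k0.
have := qbinom_le_shift p_ge2R (a.+1 - k) (j.+1 - k) k.-1.
have shift_a : (a.+1 - k + k.-1 = a)%N by lia.
have shift_j : (j.+1 - k + k.-1 = j)%N by lia.
by rewrite shift_a shift_j.
Qed.

Lemma card_SubRT_pexp_index_le (X Y : {group gT}) a :
  Y \subset X -> #|X| = (p ^ a * #|Y|)%N -> (INR #|SubRT X Y| <= galois_number p a)%R.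
Proof.
move=> sYX oX.
have cover : (#|SubRT X Y| <= \sum_(j < a.+1) #|SubRT_level X Y j|)%N.
  apply: (@card_le_sum_cover _ _ _ predT (fun j : 'I_a.+1 => SubRT_level X Y j)) => H.
  rewrite inE => /andP [sYH sHX].
  have [k ka oH] := card_mid_pexp sYH sHX oX.
  by exists (Ordinal (ka : (k < a.+1)%N)) => //; rewrite !inE sYH sHX oH eqxx.
apply: Rle_trans (le_INR _ _ (elimT leP cover)) _.
by apply: (@INR_sum_le (fun j => #|SubRT_level X Y j|) (qbinom p a)) => j _;
  apply: card_SubRT_level_le.
Qed.
End PrimePowerIndex.

HB.instance Definition _ := Monoid.isComLaw.Build R R1 Rmult
  (fun x y z => esym (Rmult_assoc x y z)) Rmult_comm Rmult_1_l.

Lemma prodR_scale l (a : R) (S : 'I_l -> R) :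
  \big[Rmult/R1]_(i < l) (a * S i)%R = (a ^ l * \big[Rmult/R1]_(i < l) S i)%R.
Proof.
rewrite big_split /= big_const_ord; congr Rmult.
by elim: l {S} => [|l IH] //=; rewrite IH.
Qed.

Lemma INR_prod_le (I : finType) (f : I -> nat) (g : I -> R) :
  (forall i, INR (f i) <= g i)%R -> (INR (\prod_i f i) <= \big[Rmult/R1]_i g i)%R.
Proof.
move=> fg; elim/big_rec2: _ => [|i m x _ IH]; first exact: Rle_refl.
by rewrite mult_INR; apply: Rmult_le_compat; [apply: pos_INR | apply: pos_INR | apply: fg |].
Qed.

Lemma card_ffun_family (I J : finType) (Q : I -> {set J}) :
  #|[set f : {ffun I -> J} | [forall i, f i \in Q i]]| = (\prod_i #|Q i|)%N.
Proof.
rewrite (eq_bigr (fun i => \sum_(j in Q i) 1)%N); last by move=> i _; rewrite sum1_card.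
rewrite bigA_distr_big_dep -sum1_card.
rewrite [RHS](eq_bigr (fun _ => 1%N)); last by move=> f _; rewrite big1_eq.
by apply: eq_bigl => f; rewrite inE; apply/forallP/familyP.
Qed.

Section SylowCodes.
Local Open Scope group_scope.
Variables (gT : finGroupType) (G T : {group gT}) (l : nat) (p c : 'I_l -> nat).
Hypotheses (sTG : T \subset G) (p_prime : forall i, prime (p i)) (p_inj : injective p)
  (c_gt0 : forall i, (0 < c i)%N) (indexGT : #|G : T| = (\prod_(i < l) p i ^ c i)%N).
Variable P : 'I_l -> {group gT}.
Hypothesis sylP : forall i, (p i).-Sylow(G) (P i).

Lemma partn_index i : (#|G : T|`_(p i) = p i ^ c i)%N.
Proof.
have rest_gt0 : (0 < \prod_(j < l | j != i) p j ^ c j)%N.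
  by apply: prodn_gt0 => j; rewrite expn_gt0 prime_gt0.
rewrite indexGT (bigD1 i) //= partnM ?expn_gt0 ?(prime_gt0 (p_prime i)) //.
rewrite part_pnat_id; last by rewrite pnatX pnat_id ?orbT.
rewrite part_p'nat ?muln1 //.
apply: (big_ind (fun n => (p i)^'.-nat n)) => // [m n pm pn | j ji].
  by rewrite pnatM pm pn.
rewrite pnatX (pnatE _ (p_prime j)) !inE.
by apply/orP; left; apply: contra ji => /eqP/p_inj ->; apply: eqxx.
Qed.

Lemma card_Sylow_P i : #|P i| = (#|T|`_(p i) * p i ^ c i)%N.
Proof. by rewrite (card_Hall (sylP i)) -(Lagrange sTG) partnM ?cardG_gt0 ?partn_index. Qed.

Definition aligned i (H : {group gT}) g :=
  [&& g \in G, (p i).-Sylow(T :^ g) (P i :&: T :^ g) & (p i).-Sylow(H :^ g) (P i :&: H :^ g)].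

Lemma aligned_exists i (H : {group gT}) : H \in SubRT G T -> exists g, aligned i H g.
Proof.
rewrite inE => /andP [sTH sHG].
have [D sylD] := Sylow_exists (p i) T.
have [Q sylQ sDQ] := Sylow_superset (subset_trans (pHall_sub sylD) sTH) (pHall_pgroup sylD).
have [x xG sQx] := Sylow_Jsub (sylP i) (subset_trans (pHall_sub sylQ) sHG) (pHall_pgroup sylQ).
have pP := pgroupS (subsetIl _ _) (pHall_pgroup (sylP i)).
have sylQx : (p i).-Sylow(H :^ x) (Q :^ x) by rewrite pHallJ2.
have sylDx : (p i).-Sylow(T :^ x) (D :^ x) by rewrite pHallJ2.
have PHx : P i :&: H :^ x :=: Q :^ x.
  by apply: (sub_pHall sylQx (pP _)); rewrite ?subsetIr // subsetI sQx conjSg (pHall_sub sylQ).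
have PTx : P i :&: T :^ x :=: D :^ x.
  apply: (sub_pHall sylDx (pP _)); rewrite ?subsetIr // subsetI conjSg (pHall_sub sylD).
  by rewrite (subset_trans _ sQx) // conjSg.
by exists x; rewrite /aligned xG PHx PTx sylQx sylDx.
Qed.

Lemma aligned_mul i (H : {group gT}) g y u : H \in SubRT G T -> aligned i H g ->
  y \in T :^ g -> u \in P i -> aligned i H (g * (y * u)).
Proof.
rewrite inE => /andP [sTH _] /and3P [gG sylT sylH] yT uP.
have uG : u \in G := subsetP (pHall_sub (sylP i)) u uP.
have yG : y \in G by apply: subsetP yT; rewrite -(conjGid gG) conjSg.
have yH : y \in H :^ g by apply: subsetP yT; rewrite conjSg.
have PuP : P i :^ u = P i by rewrite conjGid.
rewrite /aligned !groupM //= !conjsgM (conjGid yT) (conjGid yH) -{1 2}PuP -!conjIg.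
by rewrite !pHallJ2 sylT sylH.
Qed.

Definition aligned_set i H := [set g | aligned i H g].

Lemma card_aligned_set i (H : {group gT}) :
  H \in SubRT G T -> (#|T| * p i ^ c i <= #|aligned_set i H|)%N.
Proof.
move=> HS; have [g alg] := aligned_exists i HS.
have sub : g *: (T :^ g * P i) \subset aligned_set i H.
  apply/subsetP => x; rewrite mem_lcoset => /mulsgP [y u yT uP ex].
  by rewrite inE -(mulKVg g x) ex aligned_mul.
apply: leq_trans (subset_leq_card sub); rewrite card_lcoset.
have /and3P [_ sylT _] := alg.
have := mul_cardG (T :^ g) (P i).
rewrite setIC (card_Hall sylT) !cardJg card_Sylow_P mulnCA [RHS]mulnC => /eqP.
by rewrite eqn_pmul2l ?part_gt0 // => /eqP ->.
Qed.

Lemma Sylows_sub_eq (D H : {group gT}) :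
  T \subset D -> D \subset H -> H \subset G ->
  (forall i, exists2 Q : {group gT}, (p i).-Sylow(H) Q & Q \subset D) -> D :=: H.
Proof.
move=> sTD sDH sHG sylD; apply/eqP; rewrite eqEsubset sDH -indexg_eq1 /=.
have iHD_dvd : (#|H : D| %| #|G : T|)%N.
  rewrite -(Lagrange_index sHG (subset_trans sTD sDH)) -(Lagrange_index sDH sTD).
  by rewrite dvdn_mull // dvdn_mulr.
have iHD_coprime i : coprime #|H : D| (p i).
  have [Q /and3P [_ _ p'iHQ] sQD] := sylD i.
  have := pnat_dvd (_ : #|H : D| %| #|H : Q|)%N p'iHQ.
  rewrite -(Lagrange_index sDH sQD) dvdn_mulr // => /(_ isT).
  by rewrite p'natE // coprime_sym prime_coprime.
have : coprime #|H : D| #|G : T|.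
  rewrite indexGT; apply: (big_ind (coprime #|H : D|)) => [|m n cm cn|i _].
  - exact: coprimen1.
  - by rewrite coprimeMr cm cn.
  - exact: coprimeXr.
by rewrite /coprime (gcdn_idPl iHD_dvd).
Qed.

Definition code i (H : {group gT}) : {set gT * {group gT}} :=
  [set (g, (P i :&: H :^ g)%G) | g in aligned_set i H].

Definition codes (H : {group gT}) :=
  [set F : {ffun 'I_l -> gT * {group gT}} | [forall i, F i \in code i H]].

Lemma card_codes H : #|codes H| = (\prod_i #|aligned_set i H|)%N.
Proof.
rewrite card_ffun_family; apply: eq_bigr => i _.
by apply: card_imset => g1 g2 /(congr1 fst).
Qed.

Definition decode (F : {ffun 'I_l -> gT * {group gT}}) : {set gT} :=
  <<T :|: \bigcup_(i < l) ((F i).2 :^ (F i).1^-1)>>.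

Lemma decodeK (H : {group gT}) F : H \in SubRT G T -> F \in codes H -> decode F = H.
Proof.
rewrite !inE => /andP [sTH sHG] /forallP codeF.
have {}codeF i : exists2 g, aligned i H g & F i = (g, (P i :&: H :^ g)%G).
  by have /imsetP [g alg ->] := codeF i; exists g; rewrite // inE in alg.
have sDH : decode F \subset H.
  rewrite gen_subG subUset sTH; apply/bigcupsP => i _.
  by have [g _ ->] := codeF i; rewrite sub_conjgV subsetIr.
have sTD : T \subset decode F by rewrite sub_gen // subsetUl.
apply: (Sylows_sub_eq (D := [group of decode F])) => // i.
have [g /and3P [_ _ sylH] Fi] := codeF i.
exists ((P i :&: H :^ g) :^ g^-1)%G; first by rewrite -(pHallJ2 _ _ _ g) conjsgKV.
rewrite sub_gen // (subset_trans _ (subsetUr _ _)) //.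
by apply: (bigcup_max i) => //; rewrite Fi.
Qed.

Definition code_space i : {set gT * {group gT}} :=
  [set gK | [&& gK.1 \in G, (p i).-Sylow(T :^ gK.1) (P i :&: T :^ gK.1)
              & gK.2 \in SubRT (P i) (P i :&: T :^ gK.1)%G]].

Lemma codes_sub H : H \in SubRT G T ->
  codes H \subset [set F : {ffun 'I_l -> gT * {group gT}} | [forall i, F i \in code_space i]].
Proof.
rewrite inE => /andP [sTH _]; apply/subsetP => F; rewrite !inE => /forallP codeF.
apply/forallP => i; have /imsetP [g] := codeF i; rewrite !inE => /and3P [gG sylT _] ->.
by rewrite /= gG sylT subsetIl setIS ?conjSg.
Qed.

Lemma card_SubRT_mul_le :
  (#|SubRT G T| * (#|T| ^ l * #|G : T|) <= \prod_i #|code_space i|)%N.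
Proof.
rewrite -card_ffun_family -sum_nat_const.
apply: leq_trans (sum_card_le_disjoint codes_sub _); last first.
  by move=> H1 H2 S1 S2 F F1 F2; apply: group_inj; rewrite -(decodeK S1 F1) (decodeK S2 F2).
have -> : (#|T| ^ l = \prod_(i < l) #|T|)%N by rewrite prod_nat_const card_ord.
apply: leq_sum => H HS; rewrite card_codes indexGT -big_split.
by apply: leq_prod => i _; apply: card_aligned_set.
Qed.

Lemma card_SubRT_Sylow_le i g : (p i).-Sylow(T :^ g) (P i :&: T :^ g) ->
  (INR #|SubRT (P i) (P i :&: T :^ g)%G| <= Sfun (p i) (c i))%R.
Proof.
move=> sylT.
apply: Rle_trans (galois_number_le_Sfun (INR_prime_ge2 (p_prime i)) (c_gt0 i)).
apply: (card_SubRT_pexp_index_le (p_prime i) (subsetIl (P i) (T :^ g))).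
by rewrite card_Sylow_P /= (card_Hall sylT) cardJg mulnC.
Qed.

Lemma card_code_space_le i : (INR #|code_space i| <= INR #|G| * Sfun (p i) (c i))%R.
Proof.
pose fiber g := [set gK in code_space i | gK.1 == g].
have cover : (#|code_space i| <= \sum_(g in G) #|fiber g|)%N.
  apply: card_le_sum_cover => gK gKW; exists gK.1; last by rewrite inE gKW eqxx.
  by move: gKW; rewrite inE => /and3P [].
apply: Rle_trans (le_INR _ _ (elimT leP cover)) (INR_sum_le_card _) => g gG.
have [sylT | nsylT] := boolP ((p i).-Sylow(T :^ g) (P i :&: T :^ g)).
  apply: Rle_trans (card_SubRT_Sylow_le sylT); apply: le_INR; apply/leP.
  apply: leq_trans (leq_imset_card (pair g) (SubRT (P i) (P i :&: T :^ g)%G)).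
  apply/subset_leq_card/subsetP => -[g' K]; rewrite !inE /=.
  by move=> /andP [/and3P [_ _ KS] /eqP eg]; rewrite -eg imset_f // inE.
rewrite (_ : fiber g = set0) ?cards0.
  exact: Sfun_ge0 (INR_prime_ge2 (p_prime i)) (c_gt0 i).
apply/setP => -[g' K]; rewrite !inE /=; apply/negbTE/negP.
by move=> /andP [/and3P [_ sylT' _] /eqP eg]; move: nsylT; rewrite -eg sylT'.
Qed.

Lemma card_SubRT_mul_index_le :
  (INR #|SubRT G T| * INR #|G : T|
     <= INR #|G : T| ^ l * \big[Rmult/R1]_(i < l) Sfun (p i) (c i))%R.
Proof.
have T_gt0 : (0 < INR #|T| ^ l)%R by apply: pow_lt; apply: lt_0_INR; apply/ltP.
have := le_INR _ _ (elimT leP card_SubRT_mul_le).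
move/Rle_trans/(_ (INR_prod_le card_code_space_le)).
rewrite prodR_scale -(Lagrange sTG) !mult_INR INR_expn Rpow_mult_distr.
set S := \big[Rmult/R1]_(i < l) _ => count.
apply: (Rmult_le_reg_l _ _ _ T_gt0); nra.
Qed.
End SylowCodes.

Theorem proposition3p2 (gT : finGroupType) (R T : {group gT})
  (l : nat) (p c : 'I_l -> nat) :
  T \proper R ->
  (forall i, prime (p i)) ->
  injective p ->
  (forall i, (0 < c i)%N) ->
  (#|R : T|)%g = (\prod_(i < l) p i ^ c i)%N ->
  Rle (INR #|SubRT R T|)
      (Rmult (pow (INR (#|R : T|)%g) (l - 1)%N)
             (\big[Rmult/R1]_(i < l) Sfun (p i) (c i))).
Proof.
move=> prTR p_prime p_inj c_gt0 indexRT; have sTR := proper_sub prTR.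
pose P i := sval (Sylow_exists (p i) R).
have sylP i : ((p i).-Sylow(R) (P i))%g := svalP (Sylow_exists (p i) R).
have := card_SubRT_mul_index_le sTR p_prime p_inj c_gt0 indexRT sylP.
have l_gt0 : (0 < l)%N.
  case: (posnP l) => // l0; subst l; rewrite big_ord0 in indexRT.
  by move: prTR; rewrite properEcard sTR -(Lagrange sTR) indexRT muln1 ltnn.
have N_gt0 : (0 < INR #|R : T|%g)%R by apply: lt_0_INR; apply/ltP.
have powN : (INR #|R : T|%g ^ l = INR #|R : T|%g ^ (l - 1) * INR #|R : T|%g)%R.
  by rewrite -{1}(subnK l_gt0) pow_add pow_1.
rewrite powN => count.
by apply: (Rmult_le_reg_r _ _ _ N_gt0); nra.
Qed.
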